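(* Let $\psi(x,z)$ be a trigonometric Darboux transform of $e^{xz}$, with $\psi=\frac1{f(z)}Pe^{xz}$ and $e^{xz}=\frac{1}{g(z)}Q\psi$, where $P,Q\in\mathbb{C}(e^x)[\partial]$. Write $$P=\frac{1}{\theta(e^x)}\overline P,\qquad Q=\overline Q\,\frac{1}{\nu(e^x)},$$ with $\overline P,\overline Q\in\mathbb{C}[e^x][\partial]$ and $\theta,\nu$ polynomials. Then $$\psi(x,z)=\frac{1}{\theta(e^x)}\frac{1}{f(z)}\,b(\overline P)e^{xz},\qquad e^{xz}=\frac{1}{\nu(e^x)}\,b(\overline Q)\frac{1}{g(z)}\psi(x,z),$$ where $b(\overline P)$ and $b(\overline Q)$ act in the variable $z$. Consequently $\psi$ satisfies the difference equation in $z$ $$f(z)^{-1}\,b(\overline P)\,b(\overline Q)\,g(z)^{-1}\psi(x,z)=\theta(e^x)\nu(e^x)\psi(x,z),$$ in addition to the differential equation $PQ\psi=f(z)g(z)\psi$ in $x$.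
   Context: Notation: $\partial=\frac{\partial}{\partial x}$. Darboux transform: $f,g$ are monic polynomials, $P,Q$ are monic differential operators, and $\mathrm{ord}\,P=\deg f$. It is trigonometric when the coefficients of $P$ and $Q$ are rational in $e^x$. Shift operator: $T$ acts on functions of $z$ by $Tf(z)=f(z+1)$. The map $b$: the anti-isomorphism $b:\mathbb{C}[e^x][\partial]\to\mathbb{C}[z][T]$ determined by $b(e^x)=T$ and $b(\partial)=z$; explicitly $b\big(\sum a_{ij}e^{ix}\partial^j\big)=\sum a_{ij}z^jT^i$. It satisfies $A e^{xz}=b(A)e^{xz}$ for every $A\in\mathbb{C}[e^x][\partial]$. *)

From HB Require Import structures.
From mathcomp Require Import all_boot all_order all_algebra.
Set Implicit Arguments. Unset Strict Implicit. Unset Printing Implicit Defensive.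
Import Order.TTheory GRing.Theory Num.Theory.
Local Open Scope ring_scope.
Local Open Scope quotient_scope.

(* Every function occurring in the statement has the form
        R(e^x, z) * e^{xz}       with R a rational function of (e^x, z).
   We represent such a function by its coefficient R, an element of
        Fn F := {fraction {poly {poly F}}}
   where, in {poly {poly F}}, the OUTER variable is X = e^x and the INNER
   variable is z.  The function e^{xz} itself is represented by 1.
   ------------------------------------------------------------------------ *)

Notation "x %:F" := (@FracField.tofrac _ x).

Section Encoding.
Variable F : numClosedFieldType.

Local Notation Pol := {poly {poly F}}.
Definition Fn := {fraction Pol}.

Definition fnum (r : Fn) : Pol := (frac (repr r)).1.
Definition fden (r : Fn) : Pol := (frac (repr r)).2.

(* the derivation X d/dX on Pol (X = e^x), i.e. d/dx on polynomials in e^x *)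
Definition dXpol (p : Pol) : Pol := 'X * p^`().
Definition shpol (p : Pol) : Pol := map_poly (fun c : {poly F} => c \Po ('X + 1)) p.

Definition dXfrac (r : Fn) : Fn :=
  ((dXpol (fnum r) * fden r - fnum r * dXpol (fden r))%:F) / ((fden r * fden r)%:F).
Definition shfrac (r : Fn) : Fn := (shpol (fnum r))%:F / (shpol (fden r))%:F.

Definition ex : Fn := ('X : Pol)%:F.
Definition zz : Fn := ((('X : {poly F})%:P) : Pol)%:F.
Definition polyEx (a : {poly F}) : Fn := (map_poly polyC a : Pol)%:F.
Definition polyZ  (a : {poly F}) : Fn := ((a%:P) : Pol)%:F.

(* d/dx acting on the function R e^{xz}:  d/dx (R e^{xz}) = (e^x R_X + z R) e^{xz} *)
Definition Dx (r : Fn) : Fn := dXfrac r + zz * r.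
(* T acting on the function R e^{xz}:  (T(R e^{xz}))(z) = e^x R(e^x,z+1) e^{xz} *)
Definition Tz (r : Fn) : Fn := ex * shfrac r.

(* Operators of C[e^x][d]: A = \sum_j a_j(e^x) d^j is encoded as A : Pol whose
   outer variable is d and whose j-th coefficient a_j : {poly F} is a
   polynomial in e^x.  Its action on functions: *)
Definition opx (A : Pol) (r : Fn) : Fn :=
  \sum_(j < size A) polyEx A`_j * iter j Dx r.

(* Operators of C[z][T]: B = \sum_i b_i(z) T^i is encoded as B : Pol whose
   outer variable is T and whose i-th coefficient b_i : {poly F} is a
   polynomial in z.  Its action on functions: *)
Definition opz (B : Pol) (r : Fn) : Fn :=
  \sum_(i < size B) polyZ B`_i * iter i Tz r.

(* The anti-isomorphism b : C[e^x][d] -> C[z][T],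
   b (\sum a_ij e^{ix} d^j) = \sum a_ij z^j T^i.
   Here A`_j`_i = a_ij. *)
Definition bmap (A : Pol) : Pol :=
  \sum_(j < size A) \sum_(i < size A`_j) ((A`_j`_i *: ('X : {poly F})^+ j)%:P * 'X^i).

Definition opP (theta : {poly F}) (Pbar : {poly {poly F}}) (r : Fn) : Fn :=
  (polyEx theta)^-1 * opx Pbar r.
Definition opQ (Qbar : {poly {poly F}}) (nu : {poly F}) (r : Fn) : Fn :=
  opx Qbar ((polyEx nu)^-1 * r).
End Encoding.

From HB Require Import structures.
From mathcomp Require Import all_boot all_order all_algebra.
From mathcomp Require Import ring zify.
Import Order.TTheory GRing.Theory Num.Theory.
Set Implicit Arguments. Unset Strict Implicit. Unset Printing Implicit Defensive.
Local Open Scope ring_scope.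

(* The proof rests on three facts.
   1. Operators of C[e^x][d] (opx) commute with operators of C[z][T] (opz):
      d/dx commutes with T, polynomials in e^x are T-invariant and polynomials
      in z are d/dx-constants.
   In the theorem, the first identity is fact 2 for Pbar; for the second,
   nu(e^x)^-1 b(Qbar) g(z)^-1 psi and e^{xz} have the same image under Qbar by
   facts 1 and 2, hence coincide by fact 3; the last two follow by cancelling. *)

Section FieldFacts.
Variable K : fieldType.

(* The quotient rule (a/b)' = (a'b - ab')/b^2 does not depend on the chosen
   representative a/b = n/d, given a derivation of the cross relation ad = nb. *)
Lemma quotient_rule_wd (a b n d da db dn dd : K) : b != 0 -> d != 0 ->
  a * d = n * b -> da * d + a * dd = dn * b + n * db ->
  (da * b - a * db) / (b * b) = (dn * d - n * dd) / (d * d).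
Proof.
move=> b0 d0 ad_nb dad_dnb.
have ea : a = n * b / d by rewrite -ad_nb mulfK.
have eda : da = (dn * b + n * db - a * dd) / d by rewrite -dad_dnb addrK mulfK.
by rewrite eda ea; field; rewrite b0 d0.
Qed.

Lemma quotient_ruleB (a b c e da db dc de : K) : b != 0 -> e != 0 ->
  ((da * e + a * de - (dc * b + c * db)) * (b * e) - (a * e - c * b) * (db * e + b * de))
    / ((b * e) * (b * e))
  = (da * b - a * db) / (b * b) - (dc * e - c * de) / (e * e).
Proof. by move=> b0 e0; field; rewrite b0 e0. Qed.

Lemma quotient_ruleM (a b c e da db dc de : K) : b != 0 -> e != 0 ->
  ((da * c + a * dc) * (b * e) - (a * c) * (db * e + b * de)) / ((b * e) * (b * e))
  = (da * b - a * db) / (b * b) * (c / e) + a / b * ((dc * e - c * de) / (e * e)).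
Proof. by move=> b0 e0; field; rewrite b0 e0. Qed.
End FieldFacts.

Section LinearOperators.
Variable K : comNzRingType.

Lemma iter_commute (T : Type) (f g : T -> T) :
  (forall x, f (g x) = g (f x)) -> forall n x, iter n f (g x) = g (iter n f x).
Proof. by move=> fg; elim=> [//|n IHn] x /=; rewrite IHn fg. Qed.

(* The operator  r |-> sum_(i < n) c_i D^i r  with coefficients c and base map D;
   both opx and opz are of this form. *)
Definition linop (D : K -> K) (c : nat -> K) (n : nat) (r : K) : K :=
  \sum_(i < n) c i * iter i D r.

Lemma linopE D c n r : linop D c n r = \sum_(i < n) c i * iter i D r.
Proof. by []. Qed.

Section OneOperator.
Variables (D : {additive K -> K}) (c : nat -> K) (n : nat).

Lemma iterB i : {morph iter i D : x y / x - y}.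
Proof. by elim: i => [//|i IHi] x y /=; rewrite IHi raddfB. Qed.

Lemma linopB : {morph linop D c n : x y / x - y}.
Proof.
by move=> x y; rewrite /linop -sumrB; apply: eq_bigr => i _; rewrite iterB mulrBr.
Qed.

Lemma linop0 : linop D c n 0 = 0.
Proof. by have := linopB 0 0; rewrite subrr => ->; rewrite subrr. Qed.

Lemma linopD : {morph linop D c n : x y / x + y}.
Proof.
have linopN z : linop D c n (- z) = - linop D c n z.
  by rewrite -sub0r linopB linop0 sub0r.
by move=> x y; rewrite -[y]opprK linopB linopN !opprK.
Qed.

Lemma linop_scale k : (forall x, D (k * x) = k * D x) ->
  forall r, linop D c n (k * r) = k * linop D c n r.
Proof.
move=> Dk r; rewrite /linop mulr_sumr; apply: eq_bigr => i _.
by rewrite (iter_commute Dk) mulrCA.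
Qed.

Lemma linop_commute (E : {additive K -> K}) :
  (forall x, E (D x) = D (E x)) -> (forall i x, E (c i * x) = c i * E x) ->
  forall r, E (linop D c n r) = linop D c n (E r).
Proof.
move=> ED Ec r; rewrite /linop raddf_sum; apply: eq_bigr => i _.
by rewrite Ec (iter_commute (fun x => esym (ED x))).
Qed.
End OneOperator.

Lemma linop_comm (D1 D2 : {additive K -> K}) (c1 c2 : nat -> K) (n1 n2 : nat) :
  (forall x, D1 (D2 x) = D2 (D1 x)) ->
  (forall j x, D1 (c2 j * x) = c2 j * D1 x) ->
  (forall i x, D2 (c1 i * x) = c1 i * D2 x) ->
  forall r, linop D1 c1 n1 (linop D2 c2 n2 r) = linop D2 c2 n2 (linop D1 c1 n1 r).
Proof.
move=> D12 D1c2 D2c1 r.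
have D2L x : D2 (linop D1 c1 n1 x) = linop D1 c1 n1 (D2 x).
  exact: linop_commute (fun y => esym (D12 y)) D2c1 x.
rewrite [linop D2 _ _ r]linopE (big_morph _ (linopD D1 c1 n1) (linop0 D1 c1 n1)).
rewrite [RHS]linopE; apply: eq_bigr => j _; rewrite linop_scale //.
by rewrite (iter_commute D2L).
Qed.
End LinearOperators.

Section Encoding.
Variable F : numClosedFieldType.
Local Notation Pol := {poly {poly F}}.
Local Notation Fun := (Fn F).

Definition shz (c : {poly F}) : {poly F} := c \Po ('X + 1).

Fact shz_is_zmod_morphism : zmod_morphism shz.
Proof. by move=> p q; rewrite /shz comp_polyB. Qed.
HB.instance Definition _ := GRing.isZmodMorphism.Build _ _ shz shz_is_zmod_morphism.

Fact shz_is_monoid_morphism : monoid_morphism shz.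
Proof. by split=> [|p q]; rewrite /shz ?comp_polyC ?comp_polyM. Qed.
HB.instance Definition _ := GRing.isMonoidMorphism.Build _ _ shz shz_is_monoid_morphism.

Lemma shz_inj : injective shz.
Proof.
move=> p q; rewrite /shz => epq.
by rewrite -(comp_polyXaddC_K p 1) -(comp_polyXaddC_K q 1) polyC1 epq.
Qed.

Lemma shpolE (p : Pol) : shpol p = map_poly shz p.
Proof. by []. Qed.

Lemma shpolB (p q : Pol) : shpol (p - q) = shpol p - shpol q.
Proof. exact: rmorphB. Qed.

Lemma shpolM (p q : Pol) : shpol (p * q) = shpol p * shpol q.
Proof. exact: rmorphM. Qed.

Lemma shpol_eq0 (p : Pol) : (shpol p == 0) = (p == 0).
Proof. by rewrite shpolE -!size_poly_eq0 size_map_inj_poly ?rmorph0 //; apply: shz_inj. Qed.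

Lemma dXpolB (p q : Pol) : dXpol (p - q) = dXpol p - dXpol q.
Proof. by rewrite /dXpol derivB mulrBr. Qed.

Lemma dXpolM (p q : Pol) : dXpol (p * q) = dXpol p * q + p * dXpol q.
Proof. by rewrite /dXpol derivM mulrDr mulrA mulrCA. Qed.

Lemma dXpolC (c : {poly F}) : dXpol c%:P = 0.
Proof. by rewrite /dXpol derivC mulr0. Qed.

Lemma dXpolX : dXpol ('X : Pol) = 'X.
Proof. by rewrite /dXpol derivX mulr1. Qed.

Lemma dXpol_shpol (p : Pol) : dXpol (shpol p) = shpol (dXpol p).
Proof. by rewrite /dXpol !shpolE deriv_map rmorphM /= map_polyX. Qed.

(* sizeY p is one more than the degree of p in z. *)
Lemma sizeY_mul (p q : Pol) : p != 0 -> q != 0 ->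
  (sizeY (p * q)).+1 = (sizeY p + sizeY q)%N.
Proof.
move=> p0 q0; rewrite !sizeYE rmorphM size_mul ?swapXY_eq0 // prednK //.
by rewrite addn_gt0 size_poly_gt0 swapXY_eq0 p0.
Qed.

Lemma sizeY_mul_lt (p q : Pol) : q != 0 -> (sizeY (p * q) < sizeY p + sizeY q)%N.
Proof.
move=> q0; rewrite !sizeYE rmorphM (leq_ltn_trans (size_mul_leq _ _)) // ltn_predL.
by rewrite addn_gt0 !size_poly_gt0 !swapXY_eq0 q0 orbT.
Qed.

Lemma sizeY_add (p q : Pol) : (sizeY (p + q) <= maxn (sizeY p) (sizeY q))%N.
Proof. by rewrite !sizeYE rmorphD size_polyD. Qed.

Lemma sizeY_opp (p : Pol) : sizeY (- p) = sizeY p.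
Proof. by rewrite /sizeY size_polyN; apply: eq_bigr => i _; rewrite coefN size_polyN. Qed.

Lemma sizeY_sub (p q : Pol) : (sizeY (p - q) <= maxn (sizeY p) (sizeY q))%N.
Proof. by rewrite -(sizeY_opp q) sizeY_add. Qed.

Lemma sizeY_addl (p q : Pol) : (sizeY q < sizeY p)%N -> sizeY (p + q) = sizeY p.
Proof. by rewrite !sizeYE rmorphD; apply: size_polyDl. Qed.

Lemma sizeY_dXpol (p : Pol) : (sizeY (dXpol p) <= sizeY p)%N.
Proof.
apply/bigmax_leqP => i _; rewrite /dXpol coefXM; case: ifP => _.
  by rewrite size_poly0.
by rewrite coef_deriv -scaler_nat (leq_trans (size_scale_leq _ _)) ?max_size_coefXY.
Qed.

Lemma sizeY_polyC (c : {poly F}) : sizeY (c%:P : Pol) = size c.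
Proof.
rewrite /sizeY size_polyC; have [->|_] := eqVneq c 0; first by rewrite big_ord0 size_poly0.
by rewrite big_ord1 coefC.
Qed.

Lemma sizeY1 : sizeY (1 : Pol) = 1%N.
Proof. by rewrite -polyC1 sizeY_polyC size_poly1. Qed.

Lemma sizeY_map_polyC (a : {poly F}) : a != 0 -> sizeY (map_poly polyC a) = 1%N.
Proof. by move=> a0; rewrite sizeYE swapXY_map_polyC size_polyC a0. Qed.

Lemma fden_neq0 (r : Fun) : fden r != 0.
Proof. exact: denom_ratioP. Qed.

Lemma fracE (r : Fun) : r = (fnum r)%:F / (fden r)%:F.
Proof.
apply: (@mulIf _ (fden r)%:F); first by rewrite tofrac_eq0 fden_neq0.
rewrite mulfVK ?tofrac_eq0 ?fden_neq0 // /fnum /fden -{1}[r]reprK.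
move: (repr r) => x; unlock FracField.tofrac.
rewrite -[LHS]FracField.pi_mul; apply/eqmodP => /=.
rewrite FracField.equivfE /FracField.mulf /=.
by rewrite !numden_Ratio ?mulr1 ?mul1r ?oner_neq0 ?denom_ratioP // mulrC.
Qed.

Lemma fracP (r : Fun) : exists a b : Pol, b != 0 /\ r = a%:F / b%:F.
Proof. by exists (fnum r), (fden r); rewrite -fracE fden_neq0. Qed.

Lemma frac_cross (a b : Pol) (r : Fun) : b != 0 -> r = a%:F / b%:F ->
  a * fden r = fnum r * b.
Proof.
move=> b0 er; apply/eqP.
by rewrite -tofrac_eq !tofracM -eqr_div ?tofrac_eq0 ?fden_neq0 // -er -fracE.
Qed.

Lemma frac_tofrac (p : Pol) : p%:F = p%:F / 1%:F :> Fun.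
Proof. by rewrite tofrac1 divr1. Qed.

Lemma frac_neq0 (a b : Pol) : a != 0 -> b != 0 -> a%:F / b%:F != 0 :> Fun.
Proof. by move=> a0 b0; rewrite mulf_neq0 ?invr_eq0 ?tofrac_eq0. Qed.

Lemma frac_add (a b c e : Pol) : b != 0 -> e != 0 ->
  a%:F / b%:F + c%:F / e%:F = (a * e + c * b)%:F / (b * e)%:F :> Fun.
Proof. by move=> b0 e0; rewrite addf_div ?tofrac_eq0 // tofracD !tofracM. Qed.

Lemma frac_sub (a b c e : Pol) : b != 0 -> e != 0 ->
  a%:F / b%:F - c%:F / e%:F = (a * e - c * b)%:F / (b * e)%:F :> Fun.
Proof. by move=> b0 e0; rewrite -mulNr -tofracN frac_add // mulNr. Qed.

Lemma frac_mul (a b c e : Pol) :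
  a%:F / b%:F * (c%:F / e%:F) = (a * c)%:F / (b * e)%:F :> Fun.
Proof. by rewrite mulf_div !tofracM. Qed.

Lemma shfrac_frac (a b : Pol) : b != 0 ->
  shfrac (a%:F / b%:F) = (shpol a)%:F / (shpol b)%:F.
Proof.
move=> b0; have cross := frac_cross b0 (erefl (a%:F / b%:F)).
apply/eqP; rewrite eqr_div ?tofrac_eq0 ?shpol_eq0 ?fden_neq0 //.
by rewrite -!tofracM tofrac_eq -!rmorphM /= cross.
Qed.

Lemma dXfrac_frac (a b : Pol) : b != 0 ->
  dXfrac (a%:F / b%:F) = (dXpol a * b - a * dXpol b)%:F / (b * b)%:F.
Proof.
move=> b0; set r := a%:F / b%:F; have cross := frac_cross b0 (erefl r).
have dcross := congr1 (@dXpol F) cross; rewrite !dXpolM in dcross.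
rewrite /dXfrac !(tofracB, tofracM); apply: quotient_rule_wd.
- by rewrite tofrac_eq0 fden_neq0.
- by rewrite tofrac_eq0.
- by rewrite -!tofracM (esym cross).
by rewrite -!tofracM -!tofracD (esym dcross).
Qed.

Fact shfrac_is_zmod_morphism : zmod_morphism (@shfrac F).
Proof.
move=> r s; have [a [b [b0 ->]]] := fracP r; have [c [e [e0 ->]]] := fracP s.
rewrite frac_sub // !shfrac_frac ?mulf_neq0 // frac_sub ?shpol_eq0 //.
by rewrite shpolB !shpolM.
Qed.
HB.instance Definition _ :=
  GRing.isZmodMorphism.Build _ _ (@shfrac F) shfrac_is_zmod_morphism.

Lemma shfrac_tofrac (p : Pol) : shfrac p%:F = (shpol p)%:F.
Proof.
by rewrite frac_tofrac shfrac_frac ?oner_neq0 // [shpol 1]shpolE rmorph1 -frac_tofrac.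
Qed.

Fact shfrac_is_monoid_morphism : monoid_morphism (@shfrac F).
Proof.
split=> [|r s]; first by rewrite -tofrac1 shfrac_tofrac shpolE rmorph1.
have [a [b [b0 ->]]] := fracP r; have [c [e [e0 ->]]] := fracP s.
by rewrite frac_mul !shfrac_frac ?mulf_neq0 // frac_mul !shpolM.
Qed.
HB.instance Definition _ :=
  GRing.isMonoidMorphism.Build _ _ (@shfrac F) shfrac_is_monoid_morphism.

Fact dXfrac_is_zmod_morphism : zmod_morphism (@dXfrac F).
Proof.
move=> r s; have [a [b [b0 ->]]] := fracP r; have [c [e [e0 ->]]] := fracP s.
rewrite frac_sub // !dXfrac_frac ?mulf_neq0 // dXpolB !dXpolM.
move: (dXpol a) (dXpol b) (dXpol c) (dXpol e) => da db dc de.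
by rewrite !(tofracB, tofracD, tofracM); apply: quotient_ruleB; rewrite tofrac_eq0.
Qed.
HB.instance Definition _ :=
  GRing.isZmodMorphism.Build _ _ (@dXfrac F) dXfrac_is_zmod_morphism.

Lemma dXfracM (r s : Fun) : dXfrac (r * s) = dXfrac r * s + r * dXfrac s.
Proof.
have [a [b [b0 ->]]] := fracP r; have [c [e [e0 ->]]] := fracP s.
rewrite frac_mul !dXfrac_frac ?mulf_neq0 // !dXpolM.
move: (dXpol a) (dXpol b) (dXpol c) (dXpol e) => da db dc de.
by rewrite !(tofracB, tofracD, tofracM); apply: quotient_ruleM; rewrite tofrac_eq0.
Qed.

Lemma dXfrac_tofrac (p : Pol) : dXfrac p%:F = (dXpol p)%:F.
Proof.
rewrite frac_tofrac dXfrac_frac ?oner_neq0 // -polyC1 dXpolC mulr0 subr0.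
by rewrite polyC1 !mulr1 -frac_tofrac.
Qed.

Lemma dXfrac_polyZ (h : {poly F}) : dXfrac (polyZ h) = 0.
Proof. by rewrite dXfrac_tofrac dXpolC tofrac0. Qed.

Lemma dXfrac_ex : dXfrac (ex F) = ex F.
Proof. by rewrite dXfrac_tofrac dXpolX. Qed.

Lemma dXfracV (k : Fun) : dXfrac k = 0 -> dXfrac k^-1 = 0.
Proof.
have [->|k0 dk] := eqVneq k 0; first by rewrite invr0 raddf0.
have := dXfracM k k^-1; rewrite divff // -tofrac1 dXfrac_tofrac -polyC1 dXpolC.
by rewrite tofrac0 dk mul0r add0r => /esym/eqP; rewrite mulf_eq0 (negbTE k0) => /eqP.
Qed.

Lemma shfrac_polyEx (a : {poly F}) : shfrac (polyEx a) = polyEx a.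
Proof.
rewrite shfrac_tofrac shpolE -map_poly_comp; congr (_%:F).
by apply: eq_map_poly => c /=; rewrite /shz comp_polyC.
Qed.

Lemma shfrac_ex : shfrac (ex F) = ex F.
Proof. by rewrite shfrac_tofrac shpolE map_polyX. Qed.

Lemma shfrac_zz : shfrac (zz F) = zz F + 1.
Proof.
rewrite shfrac_tofrac shpolE map_polyC /= /shz comp_polyX.
by rewrite rmorphD rmorph1 tofracD tofrac1.
Qed.

Lemma dXfrac_shfrac (r : Fun) : dXfrac (shfrac r) = shfrac (dXfrac r).
Proof.
have [a [b [b0 ->]]] := fracP r.
rewrite shfrac_frac // dXfrac_frac ?shpol_eq0 // dXfrac_frac // shfrac_frac ?mulf_neq0 //.
by rewrite !dXpol_shpol shpolB !shpolM.
Qed.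

Fact Dx_is_zmod_morphism : zmod_morphism (@Dx F).
Proof. by move=> r s; rewrite /Dx raddfB mulrBr opprD addrACA. Qed.
HB.instance Definition _ := GRing.isZmodMorphism.Build _ _ (@Dx F) Dx_is_zmod_morphism.

Fact Tz_is_zmod_morphism : zmod_morphism (@Tz F).
Proof. by move=> r s; rewrite /Tz raddfB mulrBr. Qed.
HB.instance Definition _ := GRing.isZmodMorphism.Build _ _ (@Tz F) Tz_is_zmod_morphism.

Lemma Dx_scale (k : Fun) : dXfrac k = 0 -> forall r, Dx (k * r) = k * Dx r.
Proof. by move=> dk r; rewrite /Dx dXfracM dk mul0r add0r mulrDr [zz F * _]mulrCA. Qed.

Lemma Tz_scale (k : Fun) : shfrac k = k -> forall r, Tz (k * r) = k * Tz r.
Proof. by move=> sk r; rewrite /Tz rmorphM /= sk mulrCA. Qed.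

Lemma Dx_Tz (r : Fun) : Dx (Tz r) = Tz (Dx r).
Proof.
rewrite /Dx /Tz dXfracM dXfrac_ex dXfrac_shfrac rmorphD rmorphM /= shfrac_zz.
rewrite mulrDl mul1r !mulrDr [zz F * _]mulrCA.
by rewrite addrC [RHS]addrC addrA.
Qed.

Lemma opxE (A : Pol) : opx A = linop (@Dx F) (fun j => polyEx A`_j) (size A).
Proof. by []. Qed.

Lemma opzE (B : Pol) : opz B = linop (@Tz F) (fun i => polyZ B`_i) (size B).
Proof. by []. Qed.

Lemma opxB (A : Pol) : {morph opx A : r s / r - s}.
Proof. by rewrite opxE; apply: linopB. Qed.

Lemma opx_scale (A : Pol) (k : Fun) :
  dXfrac k = 0 -> forall r, opx A (k * r) = k * opx A r.
Proof. by move=> dk; rewrite opxE; apply: linop_scale; apply: Dx_scale. Qed.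

Lemma opz_scale (B : Pol) (k : Fun) :
  shfrac k = k -> forall r, opz B (k * r) = k * opz B r.
Proof. by move=> sk; rewrite opzE; apply: linop_scale; apply: Tz_scale. Qed.

Lemma opx_opz (A B : Pol) (r : Fun) : opx A (opz B r) = opz B (opx A r).
Proof.
rewrite opxE opzE; apply: linop_comm; first exact: Dx_Tz.
  by move=> i; apply: Dx_scale; apply: dXfrac_polyZ.
by move=> j; apply: Tz_scale; apply: shfrac_polyEx.
Qed.

Lemma iter_Dx1 j : iter j (@Dx F) 1 = polyZ 'X^j.
Proof.
elim: j => [|j IHj] /=; first by rewrite expr0 /polyZ polyC1 tofrac1.
by rewrite IHj /Dx dXfrac_polyZ add0r exprS /polyZ /zz polyCM tofracM.
Qed.

Lemma iter_Tz1 i : iter i (@Tz F) 1 = ex F ^+ i.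
Proof. by elim: i => [//|i IHi] /=; rewrite IHi /Tz rmorphXn /= shfrac_ex exprS. Qed.

Lemma opz1 (B : Pol) : opz B 1 = B%:F.
Proof.
rewrite -{2}[B]coefK poly_def rmorph_sum; apply: eq_bigr => i _.
by rewrite iter_Tz1 -mul_polyC rmorphM rmorphXn.
Qed.

(* b(A) is A with d replaced by z and e^x by T, the order of factors being
   immaterial in the commutative encoding. *)
Lemma bmapE (A : Pol) :
  bmap A = \sum_(j < size A) map_poly polyC A`_j * ('X^j)%:P.
Proof.
apply: eq_bigr => j _; rewrite -[A`_j in RHS]coefK poly_def rmorph_sum mulr_suml.
apply: eq_bigr => i _.
by rewrite /= map_polyZ map_polyXn -!mul_polyC polyCM mulrAC.
Qed.

Lemma opx1 (A : Pol) : opx A 1 = opz (bmap A) 1.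
Proof.
rewrite opz1 bmapE rmorph_sum; apply: eq_bigr => j _.
by rewrite iter_Dx1 /polyZ /polyEx rmorphM.
Qed.

Definition zdeg (r : Fun) : int := (sizeY (fnum r))%:Z - (sizeY (fden r))%:Z.

Definition zdeg_le (r : Fun) (d : int) : bool := (r == 0) || (zdeg r <= d).

Lemma fracP_neq0 (r : Fun) : r != 0 ->
  exists a b : Pol, [/\ a != 0, b != 0 & r = a%:F / b%:F].
Proof.
move=> r0; have [a [b [b0 er]]] := fracP r; exists a, b; split=> //.
by apply: contraNneq r0 => a0; rewrite er a0 tofrac0 mul0r.
Qed.

Lemma zdeg_frac (a b : Pol) : a != 0 -> b != 0 ->
  zdeg (a%:F / b%:F) = (sizeY a)%:Z - (sizeY b)%:Z.
Proof.
move=> a0 b0; set r := a%:F / b%:F; have cross := frac_cross b0 (erefl r).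
have n0 : fnum r != 0.
  apply: contraNneq (frac_neq0 a0 b0) => n0.
  by rewrite -/r (fracE r) n0 tofrac0 mul0r.
have := sizeY_mul a0 (fden_neq0 r); have := sizeY_mul n0 b0.
by rewrite /zdeg cross; lia.
Qed.

Lemma zdegM (r s : Fun) : r != 0 -> s != 0 -> zdeg (r * s) = zdeg r + zdeg s.
Proof.
move=> /fracP_neq0 [a [b [a0 b0 ->]]] /fracP_neq0 [c [e [c0 e0 ->]]].
rewrite frac_mul !zdeg_frac ?mulf_neq0 //.
by have := sizeY_mul a0 c0; have := sizeY_mul b0 e0; lia.
Qed.

Lemma zdeg_leD (r s : Fun) (d : int) :
  zdeg_le r d -> zdeg_le s d -> zdeg_le (r + s) d.
Proof.
have [->|r0] := eqVneq r 0; first by rewrite add0r.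
have [->|s0] := eqVneq s 0; first by rewrite addr0.
rewrite /zdeg_le (negbTE r0) (negbTE s0) /=.
move: r0 s0 => /fracP_neq0 [a [b [a0 b0 ->]]] /fracP_neq0 [c [e [c0 e0 ->]]].
rewrite !zdeg_frac // frac_add //.
have [->|n0] := eqVneq (a * e + c * b) 0; first by rewrite tofrac0 mul0r eqxx.
rewrite (negbTE (frac_neq0 n0 (mulf_neq0 b0 e0))) zdeg_frac ?mulf_neq0 //=.
have := sizeY_mul a0 e0; have := sizeY_mul c0 b0; have := sizeY_mul b0 e0.
have := sizeY_add (a * e) (c * b); rewrite leq_max.
move: (sizeY (a * e + c * b)) (sizeY (a * e)) (sizeY (c * b)) (sizeY (b * e)).
by move=> N AE CB BE /orP[]; lia.
Qed.

Lemma zdeg_dominant (r s : Fun) : r != 0 -> zdeg_le s (zdeg r - 1) ->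
  r + s != 0 /\ zdeg (r + s) = zdeg r.
Proof.
move=> r0; have [-> _|s0] := eqVneq s 0; first by rewrite addr0.
rewrite /zdeg_le (negbTE s0) /=.
move: r0 s0 => /fracP_neq0 [a [b [a0 b0 ->]]] /fracP_neq0 [c [e [c0 e0 ->]]].
rewrite [zdeg (c%:F / _)]zdeg_frac // [zdeg (a%:F / _)]zdeg_frac // frac_add // => lt_sr.
have lt_cb_ae : (sizeY (c * b) < sizeY (a * e))%N.
  have := sizeY_mul a0 e0; have := sizeY_mul c0 b0.
  by move: (sizeY (a * e)) (sizeY (c * b)) lt_sr => AE CB; lia.
have n0 : a * e + c * b != 0.
  by rewrite -sizeY_eq0 (sizeY_addl lt_cb_ae) sizeY_eq0 mulf_neq0.
rewrite frac_neq0 ?mulf_neq0 // zdeg_frac ?mulf_neq0 // (sizeY_addl lt_cb_ae).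
have := sizeY_mul a0 e0; have := sizeY_mul b0 e0.
by move: (sizeY (a * e)) (sizeY (b * e)) => AE BE; lia.
Qed.

Lemma zdeg_le_dXfrac (r : Fun) : zdeg_le (dXfrac r) (zdeg r).
Proof.
have [->|] := eqVneq r 0; first by rewrite raddf0 /zdeg_le eqxx.
move=> /fracP_neq0 [a [b [a0 b0 ->]]].
rewrite /zdeg_le [zdeg (a%:F / _)]zdeg_frac // dXfrac_frac // [a * dXpol b]mulrC.
have [->|n0] := eqVneq (dXpol a * b - dXpol b * a) 0.
  by rewrite tofrac0 mul0r eqxx.
rewrite zdeg_frac ?mulf_neq0 // orbC /=.
have := sizeY_mul b0 b0; have := sizeY_mul_lt (dXpol a) b0.
have := sizeY_mul_lt (dXpol b) a0; have := sizeY_dXpol a; have := sizeY_dXpol b.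
have := sizeY_sub (dXpol a * b) (dXpol b * a); rewrite leq_max.
move: (sizeY (dXpol a * b - dXpol b * a)) (sizeY (dXpol a * b)) (sizeY (dXpol b * a)).
move: (sizeY (b * b)) (sizeY (dXpol a)) (sizeY (dXpol b)) => BB DA DB N DAB DBA.
by case/orP; lia.
Qed.

Lemma polyEx_neq0 (a : {poly F}) : a != 0 -> polyEx a != 0.
Proof. by move=> a0; rewrite tofrac_eq0 -sizeY_eq0 sizeY_map_polyC. Qed.

Lemma zdeg_polyEx (a : {poly F}) : a != 0 -> zdeg (polyEx a) = 0.
Proof.
move=> a0; rewrite /polyEx frac_tofrac zdeg_frac ?oner_neq0 ?sizeY_map_polyC ?sizeY1 //.
by rewrite -sizeY_eq0 sizeY_map_polyC.
Qed.

Lemma zz_neq0 : zz F != 0.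
Proof. by rewrite tofrac_eq0 polyC_eq0 polyX_eq0. Qed.

Lemma zdeg_zz : zdeg (zz F) = 1.
Proof.
rewrite /zz frac_tofrac zdeg_frac ?oner_neq0 ?polyC_eq0 ?polyX_eq0 //.
by rewrite sizeY_polyC size_polyX sizeY1.
Qed.

(* d/dx r = z r + (lower order in z): it raises the z-degree by exactly one. *)
Lemma zdeg_Dx (r : Fun) : r != 0 -> Dx r != 0 /\ zdeg (Dx r) = zdeg r + 1.
Proof.
move=> r0; have zr0 : zz F * r != 0 := mulf_neq0 zz_neq0 r0.
have deg_zr : zdeg (zz F * r) = zdeg r + 1 by rewrite (zdegM zz_neq0 r0) zdeg_zz addrC.
rewrite /Dx addrC -deg_zr; apply: zdeg_dominant zr0 _.
by rewrite deg_zr addrK zdeg_le_dXfrac.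
Qed.

Lemma zdeg_iter_Dx (r : Fun) j : r != 0 ->
  iter j (@Dx F) r != 0 /\ zdeg (iter j (@Dx F) r) = zdeg r + j%:Z.
Proof.
move=> r0; elim: j => [|j [Dj0 deg_Dj]] /=; first by rewrite addr0.
by have [-> ->] := zdeg_Dx Dj0; rewrite deg_Dj; split=> //; lia.
Qed.

(* Fact 3: a nonzero operator of C[e^x][d] is injective, since its top-order
   term has strictly larger z-degree than all the others. *)
Lemma opx_inj (A : Pol) (r : Fun) : A != 0 -> opx A r = 0 -> r = 0.
Proof.
move=> A0; apply: contra_eq => r0.
have [m sizeA] : exists m, size A = m.+1.
  by exists (size A).-1; rewrite prednK ?size_poly_gt0.
have lead0 : A`_m != 0 by rewrite -lead_coef_eq0 lead_coefE sizeA in A0.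
have [Dm0 deg_Dm] := zdeg_iter_Dx m r0.
have top0 : polyEx A`_m * iter m (@Dx F) r != 0 := mulf_neq0 (polyEx_neq0 lead0) Dm0.
rewrite /opx sizeA big_ord_recr /= addrC.
apply: (proj1 (zdeg_dominant top0 _)).
rewrite zdegM ?polyEx_neq0 // zdeg_polyEx // add0r deg_Dm.
apply: (big_ind (zdeg_le^~ _)) => [|x y|i _]; first by rewrite /zdeg_le eqxx.
  exact: zdeg_leD.
have [->|ci0] := eqVneq A`_i 0.
  by rewrite /polyEx map_poly0 tofrac0 mul0r /zdeg_le eqxx.
have [Di0 deg_Di] := zdeg_iter_Dx i r0.
rewrite /zdeg_le zdegM ?polyEx_neq0 // zdeg_polyEx // add0r deg_Di orbC.
by have := ltn_ord i; lia.
Qed.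
End Encoding.

Theorem proposition4p1 (F : numClosedFieldType)
  (f g theta nu : {poly F}) (Pbar Qbar : {poly {poly F}}) (psi : Fn F) :
  f \is monic -> g \is monic ->
  theta != 0 -> nu != 0 ->
  lead_coef Pbar = theta -> lead_coef Qbar = nu ->
  size Pbar = size f ->
  psi = (polyZ f)^-1 * opP theta Pbar 1 ->
  1 = (polyZ g)^-1 * opQ Qbar nu psi ->
  [/\ psi = (polyEx theta)^-1 * ((polyZ f)^-1 * opz (bmap Pbar) 1),
      1 = (polyEx nu)^-1 * opz (bmap Qbar) ((polyZ g)^-1 * psi),
      (polyZ f)^-1 * opz (bmap Pbar) (opz (bmap Qbar) ((polyZ g)^-1 * psi))
        = polyEx theta * polyEx nu * psi
    & opP theta Pbar (opQ Qbar nu psi) = polyZ f * polyZ g * psi].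
Proof.
move=> /monic_neq0 f0 /monic_neq0 g0 theta0 nu0 _ lead_Q _ psiE oneE.
have Zf0 : polyZ f != 0 by rewrite tofrac_eq0 polyC_eq0.
have Zg0 : polyZ g != 0 by rewrite tofrac_eq0 polyC_eq0.
have Etheta0 := polyEx_neq0 theta0; have Enu0 := polyEx_neq0 nu0.
have Qbar0 : Qbar != 0 by rewrite -lead_coef_eq0 lead_Q.
have Pbar1 : opx Pbar 1 = polyEx theta * (polyZ f * psi).
  by rewrite psiE /opP (mulVKf Zf0) (mulVKf Etheta0).
have Qbar_psi : opx Qbar ((polyEx nu)^-1 * psi) = polyZ g.
  by rewrite -[RHS]mulr1 oneE (mulVKf Zg0).
(* b(Qbar) g^-1 psi = nu(e^x): after dividing by nu, both sides have the
   image Qbar e^{xz} = b(Qbar) e^{xz} *)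
have bQ_psi : opz (bmap Qbar) ((polyZ g)^-1 * psi) = polyEx nu.
  have shV : shfrac (polyEx nu)^-1 = (polyEx nu)^-1 by rewrite fmorphV /= shfrac_polyEx.
  have dV : dXfrac (polyZ g)^-1 = 0 := dXfracV (dXfrac_polyZ g).
  have same_image :
      opx Qbar ((polyEx nu)^-1 * opz (bmap Qbar) ((polyZ g)^-1 * psi)) = opx Qbar 1.
    rewrite -(opz_scale _ shV) opx_opz mulrCA (opx_scale _ dV) Qbar_psi.
    by rewrite (mulVf Zg0) opx1.
  have chi1 : (polyEx nu)^-1 * opz (bmap Qbar) ((polyZ g)^-1 * psi) = 1.
    apply/eqP; rewrite -subr_eq0; apply/eqP/(opx_inj Qbar0).
    by rewrite opxB same_image subrr.
  by rewrite -[LHS](mulVKf Enu0) chi1 mulr1.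
split.
- by rewrite -opx1 Pbar1 [(polyZ f)^-1 * _]mulrCA (mulKf Etheta0) (mulKf Zf0).
- by rewrite bQ_psi (mulVf Enu0).
- rewrite bQ_psi -[polyEx nu]mulr1 (opz_scale _ (shfrac_polyEx nu)) -opx1 Pbar1 mulr1.
  by rewrite [polyEx theta * _]mulrCA [polyEx nu * _]mulrCA (mulKf Zf0) mulrCA mulrA.
rewrite /opQ Qbar_psi /opP -[polyZ g]mulr1 (opx_scale _ (dXfrac_polyZ g)) Pbar1 mulr1.
by rewrite [polyZ g * _]mulrCA (mulKf Etheta0) mulrCA mulrA.
Qed.
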